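(* Let $\mu^\ast$ be an upper quasi-density on $\mathbb{H}$ and $\mu_\ast(X):=1-\mu^\ast(\mathbb{H}\setminus X)$ the associated lower quasi-density. Then both $\mu^\ast$ and $\mu_\ast$ have the weak Darboux property: for $f\in\{\mu^\ast,\mu_\ast\}$, every $X\subseteq\mathbb{H}$ and every $a\in[f(\emptyset),f(X)]$, there exists $A\subseteq X$ with $f(A)=a$.
   Context: $\mathbb{N}=\{0,1,2,\dots\}$, $\mathbb{N}^+=\{1,2,\dots\}$; $\mathbb{H}$ is one of $\mathbb{Z},\mathbb{N},\mathbb{N}^+$. For $X\subseteq\mathbb{H}$, $k\in\mathbb{N}^+$, $h\in\mathbb{N}$, $k\cdot X+h:=\{kx+h:x\in X\}$. An upper quasi-density on $\mathbb{H}$ is a function $\mu^\ast:\mathcal{P}(\mathbb{H})\to\mathbb{R}$ with $\mu^\ast(\mathbb{H})=1$, $\mu^\ast(X)\le1$ for all $X$, $\mu^\ast(X\cup Y)\le\mu^\ast(X)+\mu^\ast(Y)$ for all $X,Y$, and $\mu^\ast(k\cdot X+h)=\frac1k\mu^\ast(X)$ for all $X\subseteq\mathbb{H}$, $h,k\in\mathbb{N}^+$. *)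

From Stdlib Require Import Reals ZArith.
Open Scope R_scope.

Inductive HKind : Type := H_Z | H_N | H_Npos.

Definition inH (H : HKind) (z : Z) : Prop :=
  match H with
  | H_Z => True
  | H_N => (0 <= z)%Z
  | H_Npos => (0 < z)%Z
  end.

Definition subsetZ (X Y : Z -> Prop) : Prop := forall z, X z -> Y z.
Definition emptyZ : Z -> Prop := fun _ => False.
Definition unionZ (X Y : Z -> Prop) : Z -> Prop := fun z => X z \/ Y z.
Definition diffZ (X Y : Z -> Prop) : Z -> Prop := fun z => X z /\ ~ Y z.

Definition affine_image (k h : Z) (X : Z -> Prop) : Z -> Prop :=
  fun z => exists x, X x /\ z = (k * x + h)%Z.

(* Upper quasi-density on H (only its values on subsets of H matter). *)
Definition upper_quasi_density (H : HKind) (mu : (Z -> Prop) -> R) : Prop :=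
  mu (inH H) = 1 /\
  (forall X, subsetZ X (inH H) -> mu X <= 1) /\
  (forall X Y, subsetZ X (inH H) -> subsetZ Y (inH H) ->
     mu (unionZ X Y) <= mu X + mu Y) /\
  (forall X (h k : Z), subsetZ X (inH H) -> (0 < h)%Z -> (0 < k)%Z ->
     mu (affine_image k h X) = / IZR k * mu X).

Definition lower_of (H : HKind) (mu : (Z -> Prop) -> R) : (Z -> Prop) -> R :=
  fun X => 1 - mu (diffZ (inH H) X).

Definition weak_darboux (H : HKind) (f : (Z -> Prop) -> R) : Prop :=
  forall X a, subsetZ X (inH H) -> f emptyZ <= a -> a <= f X ->
    exists A, subsetZ A X /\ f A = a.

(* Send n to its van der Corput point: reverse the binary digits of n mod 2^m and read
   them as a dyadic interval of length 2^-m; these intervals shrink as m grows.  For t in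
   [0,1] let A_t be the elements of X lying in some such interval below t.  For every m,
   A_t \ A_s meets at most (t - s) 2^m + 2 residue classes mod 2^m, and translation and
   dilation invariance give each residue class mod K upper quasi-density at most 1/K;
   hence mu(A_t \ A_s) <= t - s.  By subadditivity, both t |-> mu(A_t) and
   t |-> mu_*(A_t) rise by at most t - s between s and t, which suffices for an
   intermediate value argument between A_0 = emptyset and A_1 = X. *)
From Stdlib Require Import Reals ZArith Lia Lra Psatz.
From Stdlib Require Import Classical FunctionalExtensionality PropExtensionality.
Open Scope R_scope.

Lemma set_ext (P Q : Z -> Prop) : (forall z, P z <-> Q z) -> P = Q.
Proof.
  intro HPQ; apply functional_extensionality; intro z.
  apply propositional_extensionality; apply HPQ.
Qed.

Lemma intermediate_value_one_sided_lipschitz (F : R -> R) (a : R) :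
  (forall s t, 0 <= s -> s <= t -> t <= 1 -> F t <= F s + (t - s)) ->
  F 0 <= a -> a <= F 1 -> exists t, 0 <= t <= 1 /\ F t = a.
Proof.
  intros HF Ha0 Ha1.
  set (E := fun t => 0 <= t <= 1 /\ F t <= a).
  assert (E_bound : bound E) by (exists 1; intros x [Hx _]; lra).
  assert (E0 : E 0) by (split; [lra | exact Ha0]).
  destruct (completeness E E_bound (ex_intro _ 0 E0)) as [ts [ts_ub ts_lub]].
  assert (ts_ge0 : 0 <= ts) by exact (ts_ub 0 E0).
  assert (ts_le1 : ts <= 1) by (apply ts_lub; intros x [Hx _]; lra).
  assert (Fts_le : F ts <= a).
  { apply Rnot_lt_le; intro Hlt.
    (* every s in E lies below ts - (F ts - a), contradicting the leastness of ts *)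
    enough (Hub : is_upper_bound E (ts - (F ts - a))) by (pose proof (ts_lub _ Hub); lra).
    intros s [Hs HFs]; apply Rnot_lt_le; intro Hs'.
    pose proof (ts_ub s (conj Hs HFs)).
    pose proof (HF s ts ltac:(lra) ltac:(lra) ltac:(lra)); lra. }
  exists ts; split; [lra |].
  destruct (Rle_lt_or_eq_dec ts 1 ts_le1) as [ts_lt1 | ->]; [| lra].
  apply Rle_antisym; [exact Fts_le |]; apply Rnot_lt_le; intro HFa.
  set (d := Rmin (a - F ts) (1 - ts) / 2).
  assert (d_pos : 0 < d) by (unfold d; apply Rmin_case; lra).
  assert (d_a : d < a - F ts) by (unfold d; pose proof (Rmin_l (a - F ts) (1 - ts)); lra).
  assert (d_1 : d < 1 - ts) by (unfold d; pose proof (Rmin_r (a - F ts) (1 - ts)); lra).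
  pose proof (HF ts (ts + d) ts_ge0 ltac:(lra) ltac:(lra)).
  assert (Ed : E (ts + d)) by (split; lra).
  pose proof (ts_ub _ Ed); lra.
Qed.

(* [bitrev m n] reads the m lowest binary digits of n in reverse order, so the residue
   classes mod 2^m correspond to the dyadic intervals [dyadic_lo m n, dyadic_hi m n). *)
Fixpoint bitrev (m : nat) (n : Z) : Z :=
  match m with
  | O => 0%Z
  | S m' => (2 * bitrev m' n + (n / 2 ^ Z.of_nat m') mod 2)%Z
  end.

Lemma bitrev_succ_bounds m n :
  (2 * bitrev m n <= bitrev (S m) n <= 2 * bitrev m n + 1)%Z.
Proof. cbn [bitrev]; pose proof (Z.mod_pos_bound (n / 2 ^ Z.of_nat m) 2); lia. Qed.

Lemma bitrev_nonneg m n : (0 <= bitrev m n)%Z.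
Proof. induction m; [cbn; lia |]; pose proof (bitrev_succ_bounds m n); lia. Qed.

Lemma bitrev_eq_mod m n n' :
  bitrev m n = bitrev m n' -> (n mod 2 ^ Z.of_nat m = n' mod 2 ^ Z.of_nat m)%Z.
Proof.
  revert n n'; induction m as [| m IHm]; intros n n' Hrev.
  - now rewrite !Z.mod_1_r.
  - cbn [bitrev] in Hrev.
    pose proof (Z.mod_pos_bound (n / 2 ^ Z.of_nat m) 2 ltac:(lia)).
    pose proof (Z.mod_pos_bound (n' / 2 ^ Z.of_nat m) 2 ltac:(lia)).
    assert (Hlow : bitrev m n = bitrev m n') by lia.
    assert (Hbit : ((n / 2 ^ Z.of_nat m) mod 2 = (n' / 2 ^ Z.of_nat m) mod 2)%Z) by lia.
    assert (Hpow : (0 < 2 ^ Z.of_nat m)%Z) by (apply Z.pow_pos_nonneg; lia).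
    rewrite Nat2Z.inj_succ, Z.pow_succ_r, (Z.mul_comm 2) by lia.
    rewrite !Z.rem_mul_r by lia.
    now rewrite (IHm n n' Hlow), Hbit.
Qed.

Definition dyadic_lo (m : nat) (n : Z) : R := IZR (bitrev m n) / 2 ^ m.
Definition dyadic_hi (m : nat) (n : Z) : R := (IZR (bitrev m n) + 1) / 2 ^ m.

Lemma pow2_pos (m : nat) : 0 < 2 ^ m.
Proof. apply pow_lt; lra. Qed.

Lemma dyadic_lo_lt_hi m n : dyadic_lo m n < dyadic_hi m n.
Proof.
  unfold dyadic_lo, dyadic_hi, Rdiv.
  apply Rmult_lt_compat_r; [apply Rinv_0_lt_compat, pow2_pos | lra].
Qed.

Lemma dyadic_lo_mono m m' n : (m <= m')%nat -> dyadic_lo m n <= dyadic_lo m' n.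
Proof.
  induction 1 as [| m' _ IH]; [lra |]; apply (Rle_trans _ _ _ IH).
  pose proof (bitrev_succ_bounds m' n) as [Hb _]; apply IZR_le in Hb.
  rewrite mult_IZR in Hb; pose proof (pow2_pos m').
  unfold dyadic_lo; cbn [pow].
  apply (Rmult_le_reg_r (2 * 2 ^ m')); [lra |].
  field_simplify; lra.
Qed.

Lemma dyadic_hi_anti m m' n : (m <= m')%nat -> dyadic_hi m' n <= dyadic_hi m n.
Proof.
  induction 1 as [| m' _ IH]; [lra |]; refine (Rle_trans _ _ _ _ IH).
  pose proof (bitrev_succ_bounds m' n) as [_ Hb]; apply IZR_le in Hb.
  rewrite plus_IZR, mult_IZR in Hb; pose proof (pow2_pos m').
  unfold dyadic_hi; cbn [pow].
  apply (Rmult_le_reg_r (2 * 2 ^ m')); [lra |].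
  field_simplify; lra.
Qed.

Lemma dyadic_lo_lt_hi_any m m' n : dyadic_lo m n < dyadic_hi m' n.
Proof.
  destruct (Nat.le_ge_cases m m').
  - eapply Rle_lt_trans; [apply dyadic_lo_mono; eassumption | apply dyadic_lo_lt_hi].
  - eapply Rlt_le_trans; [apply dyadic_lo_lt_hi | apply dyadic_hi_anti; assumption].
Qed.

Definition vdc_cut (t : R) (n : Z) : Prop := exists m, dyadic_hi m n <= t.

Lemma vdc_cut_mono s t n : s <= t -> vdc_cut s n -> vdc_cut t n.
Proof. intros Hst [m Hm]; exists m; lra. Qed.

Lemma vdc_cut_0 n : ~ vdc_cut 0 n.
Proof.
  intros [m Hm]; pose proof (dyadic_lo_lt_hi m n).
  enough (0 <= dyadic_lo m n) by lra.
  unfold dyadic_lo, Rdiv; apply Rmult_le_pos;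
    [apply IZR_le, bitrev_nonneg | left; apply Rinv_0_lt_compat, pow2_pos].
Qed.

Lemma vdc_cut_1 n : vdc_cut 1 n.
Proof. exists O; unfold dyadic_hi; simpl; lra. Qed.

Lemma vdc_cut_diff_bitrev s t m n : vdc_cut t n -> ~ vdc_cut s n ->
  s * 2 ^ m < IZR (bitrev m n) + 1 /\ IZR (bitrev m n) < t * 2 ^ m.
Proof.
  intros [m' Hm'] Hs; pose proof (pow2_pos m).
  assert (Hhi : s < dyadic_hi m n) by (apply Rnot_le_lt; intro; apply Hs; now exists m).
  pose proof (dyadic_lo_lt_hi_any m m' n).
  unfold dyadic_lo, dyadic_hi in *; split.
  - apply (Rmult_lt_reg_r (/ 2 ^ m)); [apply Rinv_0_lt_compat; lra |].
    rewrite Rmult_assoc, Rinv_r; lra.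
  - apply (Rmult_lt_reg_r (/ 2 ^ m)); [apply Rinv_0_lt_compat; lra |].
    rewrite (Rmult_assoc t), Rinv_r; lra.
Qed.

Section UpperQuasiDensity.

Variables (H : HKind) (mu : (Z -> Prop) -> R).
Hypothesis mu_uqd : upper_quasi_density H mu.

Lemma uqd_le1 X : subsetZ X (inH H) -> mu X <= 1.
Proof. apply mu_uqd. Qed.

Lemma uqd_affine X h k : subsetZ X (inH H) -> (0 < h)%Z -> (0 < k)%Z ->
  mu (affine_image k h X) = / IZR k * mu X.
Proof. apply mu_uqd. Qed.

Lemma uqd_le_union X Y P : subsetZ X (inH H) -> subsetZ Y (inH H) ->
  (forall z, P z <-> X z \/ Y z) -> mu P <= mu X + mu Y.
Proof. intros HX HY HP; rewrite (set_ext P (unionZ X Y) HP); now apply mu_uqd. Qed.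

Lemma uqd_empty : mu emptyZ = 0.
Proof.
  assert (Hempty : subsetZ emptyZ (inH H)) by intros z [].
  pose proof (uqd_affine emptyZ 1 2 Hempty ltac:(lia) ltac:(lia)) as Hmu.
  rewrite (set_ext (affine_image 2 1 emptyZ) emptyZ) in Hmu by firstorder.
  lra.
Qed.

Lemma uqd_residue_class Q (K : Z) : (0 < K)%Z -> subsetZ Q (inH H) ->
  (forall q q', Q q -> Q q' -> (q mod K = q' mod K)%Z) -> mu Q <= / IZR K.
Proof.
  intros HK HQ Hcong.
  assert (HKR : 0 < IZR K) by (apply IZR_lt; lia).
  destruct (classic (exists q0, Q q0)) as [[q0 Hq0] | Hnone].
  2: { rewrite (set_ext Q emptyZ), uqd_empty by firstorder.
       left; now apply Rinv_0_lt_compat. }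
  set (r := (q0 mod K)%Z).
  assert (Hr : (0 <= r < K)%Z) by (apply Z.mod_pos_bound; lia).
  set (Y := fun y => Q (K * (y - 1) + r)%Z).
  assert (HY : subsetZ Y (inH H)).
  { intros y Hy; pose proof (HQ _ Hy); destruct H; simpl in *; [exact I | nia | nia]. }
  (* Q + 2K = K Y + (r + K), with shifts chosen positive so that invariance applies *)
  assert (Hshift : affine_image 1 (2 * K) Q = affine_image K (r + K) Y).
  { apply set_ext; intro z; unfold affine_image, Y; split.
    - intros [q [Hq ->]].
      assert (Hqr : (q mod K = r)%Z) by (apply Hcong; assumption).
      pose proof (Z_div_mod_eq_full q K).
      exists (q / K + 1)%Z; split; [| nia].
      now replace (K * (q / K + 1 - 1) + r)%Z with q by nia.
    - intros [y [Hy ->]]; exists (K * (y - 1) + r)%Z; split; [exact Hy | ring]. }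
  pose proof (uqd_affine Q (2 * K) 1 HQ ltac:(lia) ltac:(lia)) as HQ1.
  rewrite Hshift, uqd_affine in HQ1 by (assumption || lia).
  replace (mu Q) with (/ IZR K * mu Y) by lra.
  rewrite <- (Rmult_1_r (/ IZR K)) at 2.
  apply Rmult_le_compat_l; [left; now apply Rinv_0_lt_compat | now apply uqd_le1].
Qed.

Lemma uqd_fibers P (g : Z -> Z) (c : R) (lo : Z) (N : nat) : subsetZ P (inH H) ->
  (forall j, mu (fun n => P n /\ g n = j) <= c) ->
  mu (fun n => P n /\ (lo <= g n < lo + Z.of_nat N)%Z) <= INR N * c.
Proof.
  intros HP Hfiber; induction N as [| N IH].
  - rewrite (set_ext _ emptyZ), uqd_empty by (cbn; unfold emptyZ; intuition lia).
    simpl; lra.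
  - rewrite S_INR.
    enough (mu (fun n => P n /\ (lo <= g n < lo + Z.of_nat (S N))%Z)
              <= mu (fun n => P n /\ (lo <= g n < lo + Z.of_nat N)%Z)
                 + mu (fun n => P n /\ g n = (lo + Z.of_nat N)%Z))
      by (pose proof (Hfiber (lo + Z.of_nat N)%Z); lra).
    apply uqd_le_union; try (intros z Hz; apply HP, Hz).
    intro z; rewrite Nat2Z.inj_succ; split.
    + intros [Hz Hg]; destruct (Z.eq_dec (g z) (lo + Z.of_nat N)); [right | left];
        split; auto; lia.
    + intros [[Hz Hg] | [Hz Hg]]; split; auto; lia.
Qed.

Lemma uqd_vdc_cut_diff_approx X s t m : subsetZ X (inH H) -> s <= t ->
  mu (fun n => X n /\ vdc_cut t n /\ ~ vdc_cut s n) <= t - s + 2 / 2 ^ m.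
Proof.
  intros HX Hst.
  set (P := fun n => X n /\ vdc_cut t n /\ ~ vdc_cut s n).
  assert (HP : subsetZ P (inH H)) by (intros z Hz; apply HX, Hz).
  set (p := 2 ^ m); assert (Hp : 0 < p) by apply pow2_pos.
  set (lo := (up (s * p) - 1)%Z); set (hi := up (t * p)).
  destruct (archimed (s * p)) as [Hs1 Hs2]; destruct (archimed (t * p)) as [Ht1 Ht2].
  assert (Hlo : IZR lo = IZR (up (s * p)) - 1) by (unfold lo; now rewrite minus_IZR).
  assert (Hsp : s * p <= t * p) by (apply Rmult_le_compat_r; lra).
  assert (Hlohi : (lo < hi)%Z) by (apply lt_IZR; rewrite Hlo; unfold hi; lra).
  assert (Hrange : forall n, P n -> (lo <= bitrev m n < hi)%Z).
  { intros n (_ & Ht & Hs).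
    destruct (vdc_cut_diff_bitrev s t m n Ht Hs) as [Hn1 Hn2]; split.
    - enough (up (s * p) < bitrev m n + 2)%Z by (unfold lo; lia).
      apply lt_IZR; rewrite plus_IZR; unfold p in *; lra.
    - apply lt_IZR; unfold hi, p in *; lra. }
  set (N := Z.to_nat (hi - lo)).
  assert (HN : Z.of_nat N = (hi - lo)%Z) by (unfold N; apply Z2Nat.id; lia).
  assert (HNR : INR N = IZR hi - IZR lo) by (rewrite INR_IZR_INZ, HN, minus_IZR; reflexivity).
  apply Rle_trans with (INR N * / p).
  - rewrite (set_ext P (fun n => P n /\ (lo <= bitrev m n < lo + Z.of_nat N)%Z)).
    2: { intro z; rewrite HN; split; [intro Hz; split; [| specialize (Hrange z Hz); lia]|];
         tauto. }
    apply uqd_fibers; [exact HP |]; intro j.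
    replace p with (IZR (2 ^ Z.of_nat m)) by (unfold p; now rewrite <- pow_IZR).
    apply uqd_residue_class; [apply Z.pow_pos_nonneg; lia | intros z Hz; apply HP, Hz |].
    intros q q' [_ Hq] [_ Hq']; apply bitrev_eq_mod; congruence.
  - rewrite HNR, Hlo.
    replace (t - s + 2 / p) with (((t - s) * p + 2) * / p) by (field; lra).
    apply Rmult_le_compat_r; [left; now apply Rinv_0_lt_compat |]; unfold hi; nra.
Qed.

Lemma uqd_vdc_cut_diff X s t : subsetZ X (inH H) -> s <= t ->
  mu (fun n => X n /\ vdc_cut t n /\ ~ vdc_cut s n) <= t - s.
Proof.
  intros HX Hst; apply Rnot_lt_le; intro Hlt.
  set (eps := mu (fun n => X n /\ vdc_cut t n /\ ~ vdc_cut s n) - (t - s)).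
  destruct (pow_lt_1_zero (/ 2) ltac:(rewrite Rabs_pos_eq; lra) (eps / 2)
              ltac:(unfold eps; lra)) as [m Hm].
  specialize (Hm m (le_n m)).
  rewrite Rabs_pos_eq, pow_inv in Hm by (left; apply pow_lt; lra).
  pose proof (uqd_vdc_cut_diff_approx X s t m HX Hst).
  unfold eps, Rdiv in *; lra.
Qed.

Lemma uqd_vdc_cut_step X s t : subsetZ X (inH H) -> s <= t ->
  mu (fun n => X n /\ vdc_cut t n) <= mu (fun n => X n /\ vdc_cut s n) + (t - s).
Proof.
  intros HX Hst; pose proof (uqd_vdc_cut_diff X s t HX Hst).
  enough (mu (fun n => X n /\ vdc_cut t n)
            <= mu (fun n => X n /\ vdc_cut s n)
               + mu (fun n => X n /\ vdc_cut t n /\ ~ vdc_cut s n)) by lra.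
  apply uqd_le_union; try (intros z Hz; apply HX, Hz).
  intro z; pose proof (vdc_cut_mono s t z Hst); destruct (classic (vdc_cut s z)); tauto.
Qed.

Lemma lower_vdc_cut_step X s t : subsetZ X (inH H) -> s <= t ->
  lower_of H mu (fun n => X n /\ vdc_cut t n)
    <= lower_of H mu (fun n => X n /\ vdc_cut s n) + (t - s).
Proof.
  intros HX Hst; pose proof (uqd_vdc_cut_diff X s t HX Hst); unfold lower_of.
  enough (mu (diffZ (inH H) (fun n => X n /\ vdc_cut s n))
            <= mu (diffZ (inH H) (fun n => X n /\ vdc_cut t n))
               + mu (fun n => X n /\ vdc_cut t n /\ ~ vdc_cut s n)) by lra.
  apply uqd_le_union; [intros z Hz; apply Hz | intros z Hz; apply HX, Hz |].
  intro z; unfold diffZ; pose proof (vdc_cut_mono s t z Hst); pose proof (HX z).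
  destruct (classic (X z /\ vdc_cut t z)); tauto.
Qed.

End UpperQuasiDensity.

Lemma weak_darboux_of_vdc_cut_step H (f : (Z -> Prop) -> R) :
  (forall X s t, subsetZ X (inH H) -> s <= t ->
     f (fun n => X n /\ vdc_cut t n) <= f (fun n => X n /\ vdc_cut s n) + (t - s)) ->
  weak_darboux H f.
Proof.
  intros Hstep X a HX Ha0 Ha1.
  rewrite (set_ext emptyZ (fun n => X n /\ vdc_cut 0 n)) in Ha0
    by (intro z; pose proof (vdc_cut_0 z); unfold emptyZ; tauto).
  rewrite (set_ext X (fun n => X n /\ vdc_cut 1 n)) in Ha1
    by (intro z; pose proof (vdc_cut_1 z); tauto).
  destruct (intermediate_value_one_sided_lipschitz
              (fun t => f (fun n => X n /\ vdc_cut t n)) a) as [t [_ Ht]];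
    [intros s t _ Hst _; now apply Hstep | assumption | assumption |].
  exists (fun n => X n /\ vdc_cut t n); split; [intros z Hz; apply Hz | exact Ht].
Qed.

Theorem mainTheorem2 (H : HKind) (mu : (Z -> Prop) -> R) :
  upper_quasi_density H mu ->
  weak_darboux H mu /\ weak_darboux H (lower_of H mu).
Proof.
  intro mu_uqd; split; apply weak_darboux_of_vdc_cut_step.
  - exact (uqd_vdc_cut_step H mu mu_uqd).
  - exact (lower_vdc_cut_step H mu mu_uqd).
Qed.
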